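(* Let $\mathcal{C}$ be a category, $J$ a directed partially ordered set, and $\boldsymbol{X}=(X_\lambda,p_{\lambda\lambda'},\Lambda)$, $\boldsymbol{Y}=(Y_\mu,q_{\mu\mu'},M)$ inverse systems in $\mathcal{C}$. For $J$-morphisms $(f,f^j_\mu),(f',f'^j_\mu):\boldsymbol{X}\to\boldsymbol{Y}$, write $(f,f^j_\mu)\sim(f',f'^j_\mu)$ if every $\mu\in M$ admits $\lambda\in\Lambda$, $\lambda\ge f(\mu),f'(\mu)$, and $j_0\in J$ such that $f^{j'}_\mu p_{f(\mu)\lambda}=f'^{j'}_\mu p_{f'(\mu)\lambda}$ for all $j'\ge j_0$. Then, whenever this equality holds for some $\lambda$ and all $j'\ge j_0$, it also holds with $\lambda$ replaced by any $\lambda'\ge\lambda$; and $\sim$ is an equivalence relation on the set of all $J$-morphisms $\boldsymbol{X}\to\boldsymbol{Y}$.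
   Context: An inverse system $\boldsymbol{X}=(X_\lambda,p_{\lambda\lambda'},\Lambda)$ in $\mathcal{C}$: $\Lambda$ directed preordered, morphisms $p_{\lambda\lambda'}:X_{\lambda'}\to X_\lambda$ for $\lambda\le\lambda'$, $p_{\lambda\lambda}=1$, $p_{\lambda\lambda'}p_{\lambda'\lambda''}=p_{\lambda\lambda''}$. A $J$-morphism $(f,f^j_\mu):\boldsymbol{X}\to\boldsymbol{Y}$ consists of $f:M\to\Lambda$ and $\mathcal{C}$-morphisms $f^j_\mu:X_{f(\mu)}\to Y_\mu$ ($\mu\in M$, $j\in J$) such that for all $\mu\le\mu'$ there exist $\lambda\ge f(\mu),f(\mu')$ and $j_0\in J$ with $f^{j'}_\mu p_{f(\mu)\lambda}=q_{\mu\mu'}f^{j'}_{\mu'}p_{f(\mu')\lambda}$ for all $j'\ge j_0$. *)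

Set Implicit Arguments.
Unset Strict Implicit.

Record Category := {
  Obj :> Type;
  Hom : Obj -> Obj -> Type;
  idm : forall a, Hom a a;
  comp : forall a b e, Hom b e -> Hom a b -> Hom a e;
  comp_assoc : forall a b e d (h : Hom e d) (g : Hom b e) (f : Hom a b),
      comp h (comp g f) = comp (comp h g) f;
  comp_id_l : forall a b (f : Hom a b), comp (idm b) f = f;
  comp_id_r : forall a b (f : Hom a b), comp f (idm a) = f
}.
Arguments Hom {c} _ _.
Arguments idm {c} _.
Arguments comp {c a b e} _ _.

Record DirPreorder := {
  dcar :> Type;
  dle : dcar -> dcar -> Prop;
  dle_refl : forall x, dle x x;
  dle_trans : forall x y z, dle x y -> dle y z -> dle x z;
  dle_directed : forall x y, exists z, dle x z /\ dle y z
}.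
Arguments dle {d} _ _.
Notation "x <=d y" := (dle x y) (at level 70).

Definition antisymmetric_dir (J : DirPreorder) : Prop :=
  forall x y : J, x <=d y -> y <=d x -> x = y.

Record InvSys (C : Category) := {
  idx : DirPreorder;
  obj : idx -> C;
  bond : forall l l' : idx, l <=d l' -> Hom (obj l') (obj l);
  bond_id : forall l (h : l <=d l), bond h = idm (obj l);
  bond_comp : forall l l' l'' (h1 : l <=d l') (h2 : l' <=d l'') (h3 : l <=d l''),
      comp (bond h1) (bond h2) = bond h3
}.
Arguments idx {C} _.
Arguments obj {C} _ _.
Arguments bond {C} _ {l l'} _.

Record JMor (C : Category) (J : DirPreorder) (X Y : InvSys C) := {
  jf : idx Y -> idx X;
  jfm : forall (j : J) (mu : idx Y), Hom (obj X (jf mu)) (obj Y mu);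
  jcond : forall (mu mu' : idx Y) (hmu : mu <=d mu'),
      exists (lam : idx X) (h1 : jf mu <=d lam) (h2 : jf mu' <=d lam) (j0 : J),
        forall j' : J, j0 <=d j' ->
          comp (jfm j' mu) (bond X h1) = comp (bond Y hmu) (comp (jfm j' mu') (bond X h2))
}.
Arguments jf {C J X Y} _ _.
Arguments jfm {C J X Y} _ _ _.

Definition Jsim (C : Category) (J : DirPreorder) (X Y : InvSys C)
    (F G : JMor J X Y) : Prop :=
  forall mu : idx Y,
    exists (lam : idx X) (h1 : jf F mu <=d lam) (h2 : jf G mu <=d lam) (j0 : J),
      forall j' : J, j0 <=d j' ->
        comp (jfm F j' mu) (bond X h1) = comp (jfm G j' mu) (bond X h2).

From Stdlib Require Import RelationClasses.

(* Equalities [u p_{a l} = v p_{b l}] persist when [l] grows, because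
   [p_{a l'} = p_{a l} p_{l l'}].  Reflexivity and symmetry of [~] are then
   immediate, and transitivity follows by passing to a common upper bound of
   the two witnesses in [Lambda] and of the two thresholds in [J]. *)

Section InverseSystem.

Variables (C : Category) (X : InvSys C).

Lemma comp_bond_eq_lift (Z : C) (a b l : idx X)
    (u : Hom (obj X a) Z) (v : Hom (obj X b) Z)
    (ha : a <=d l) (hb : b <=d l) :
  comp u (bond X ha) = comp v (bond X hb) ->
  forall (l' : idx X) (hl : l <=d l') (ha' : a <=d l') (hb' : b <=d l'),
    comp u (bond X ha') = comp v (bond X hb').
Proof.
  intros E l' hl ha' hb'.
  rewrite <- (bond_comp ha hl ha'), <- (bond_comp hb hl hb').
  now rewrite !comp_assoc, E.
Qed.

End InverseSystem.

Arguments comp_bond_eq_lift {C X Z a b l u v ha hb} _ {l'} _ _ _.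

Section JMorphisms.

Variables (C : Category) (J : DirPreorder) (X Y : InvSys C).

Lemma Jsim_refl : Reflexive (@Jsim C J X Y).
Proof.
  intros F mu.
  (* [J] may be empty; the condition on [F] at [mu <= mu] supplies an index. *)
  destruct (jcond F (dle_refl mu)) as [_ [_ [_ [j0 _]]]].
  now exists (jf F mu), (dle_refl _), (dle_refl _), j0.
Qed.

Lemma Jsim_sym : Symmetric (@Jsim C J X Y).
Proof.
  intros F G FG mu.
  destruct (FG mu) as [l [hF [hG [j0 E]]]].
  exists l, hG, hF, j0.
  intros j' hj. now rewrite (E j' hj).
Qed.

Lemma Jsim_trans : Transitive (@Jsim C J X Y).
Proof.
  intros F G K FG GK mu.
  destruct (FG mu) as [l1 [hF [hG1 [j1 E1]]]].
  destruct (GK mu) as [l2 [hG2 [hK [j2 E2]]]].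
  destruct (dle_directed l1 l2) as [l [hl1 hl2]].
  destruct (dle_directed j1 j2) as [j0 [hj1 hj2]].
  exists l, (dle_trans hF hl1), (dle_trans hK hl2), j0.
  intros j' hj.
  rewrite (comp_bond_eq_lift (E1 j' (dle_trans hj1 hj)) hl1 _
             (dle_trans hG1 hl1)).
  exact (comp_bond_eq_lift (E2 j' (dle_trans hj2 hj)) hl2 _ _).
Qed.

Lemma Jsim_equivalence : Equivalence (@Jsim C J X Y).
Proof.
  split; [exact Jsim_refl | exact Jsim_sym | exact Jsim_trans].
Qed.

End JMorphisms.

Theorem lemma3 (C : Category) (J : DirPreorder) (HJ : antisymmetric_dir J)
    (X Y : InvSys C) :
  (forall (F G : JMor J X Y) (mu : idx Y) (lam : idx X)
          (h1 : jf F mu <=d lam) (h2 : jf G mu <=d lam) (j0 : J),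
      (forall j' : J, j0 <=d j' ->
         comp (jfm F j' mu) (bond X h1) = comp (jfm G j' mu) (bond X h2)) ->
      forall (lam' : idx X) (hl : lam <=d lam')
             (h1' : jf F mu <=d lam') (h2' : jf G mu <=d lam') (j' : J),
        j0 <=d j' ->
        comp (jfm F j' mu) (bond X h1') = comp (jfm G j' mu) (bond X h2'))
  /\ Equivalence (@Jsim C J X Y).
Proof.
  split.
  - intros F G mu lam h1 h2 j0 E lam' hl h1' h2' j' hj.
    exact (comp_bond_eq_lift (E j' hj) hl h1' h2').
  - exact (Jsim_equivalence C J X Y).
Qed.
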